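(* Let $\mathbf{k}$ be a field of characteristic $0$ and $M\ge0$. For $f\in\mathcal{P}^\Sigma_{d,n}$, $b\in\mathcal{P}^\Sigma_{d,m}$, $a\in\mathcal{P}^\Sigma_{e,n+m}$ and $g\in\mathrm{Inc}(\mathbf N)$, \[(f\cdot b)\ast_g a=(f\otimes b)\ast_g\Delta(a),\] i.e. writing $\Delta(a)=\sum a^{(1)}\otimes a^{(2)}$, one has $(f\cdot b)\ast_g a=\sum (f\ast_g a^{(1)})\cdot(b\ast_g a^{(2)})$.
   Context: $\mathcal{P}_{d,n}=(\bigwedge^d\mathbf{k}^{Md})^{\otimes n}$ ($\mathcal P_{d,0}=\mathbf k$), standard basis $v_1,\dots,v_{Md}$ of $\mathbf k^{Md}$. $\Sigma_n$ permutes tensor factors; $\mathcal P^\Sigma=\bigoplus_{d,n}\mathcal P^\Sigma_{d,n}$ with $\mathcal P^\Sigma_{d,n}$ the invariants. Shuffle: for a split $\sigma=(A,B)$ of $[n+m]$ (complementary $A=\{i_1<\dots<i_n\}$, $B=\{j_1<\dots<j_m\}$), $(u_1\otimes\cdots\otimes u_n)\cdot_\sigma(w_1\otimes\cdots\otimes w_m)=z_1\otimes\cdots\otimes z_{n+m}$, $z_{i_k}=u_k$, $z_{j_k}=w_k$; $f\cdot h=\sum_\sigma f\cdot_\sigma h$ over all such splits (same $d$ required, otherwise $0$). $\mathrm{Inc}(\mathbf N)$: strictly increasing maps $\mathbf N\to\mathbf N$; for $f\in\mathcal P_{d,n}$, $h\in\mathcal P_{e,n}$, $f\ast_g h=0$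 unless $g([Md])\subseteq[M(d+e)]$, and then with $g^c:[Me]\to[M(d+e)]$ the increasing bijection onto the complement of $g([Md])$, $(x_1\otimes\cdots\otimes x_n)\ast_g(y_1\otimes\cdots\otimes y_n)=\bigotimes_i(g(x_i)\wedge g^c(y_i))$ with $g(v_{s_1}\wedge\cdots\wedge v_{s_d})=v_{g(s_1)}\wedge\cdots\wedge v_{g(s_d)}$ (bilinear; $0$ when the numbers of tensor factors differ). Comultiplication $\Delta:\mathcal P^\Sigma\to\mathcal P^\Sigma\otimes_{\mathbf k}\mathcal P^\Sigma$: for $w_1,\dots,w_n\in\bigwedge^e\mathbf k^{Me}$ and $S=\{s_1<\dots<s_j\}\subseteq[n]$, put $s(w_S)=\sum_{\tau\in\Sigma_j}w_{s_{\tau(1)}}\otimes\cdots\otimes w_{s_{\tau(j)}}$; $\Delta$ is the linear map with $\Delta(s(w_{[n]}))=\sum_{S\subseteq[n]}s(w_S)\otimes s(w_{[n]\setminus S})$. For $f\otimes b\in\mathcal P^\Sigma\otimes\mathcal P^\Sigma$ and $a_1\otimes a_2$, $(f\otimes b)\ast_g(a_1\otimes a_2):=(f\ast_g a_1)\cdot(b\ast_g a_2)$, extended linearly (terms with mismatched bidegrees vanish). *)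

From HB Require Import structures.
From mathcomp Require Import all_boot all_order all_fingroup all_algebra.
Set Implicit Arguments. Unset Strict Implicit. Unset Printing Implicit Defensive.
Import GRing.Theory.
Local Open Scope ring_scope.

(* Conventions: [N] = {1,...,N}; the basis vector v_s (1 <= s <= N) of k^N is
   indexed by the ordinal s-1 : 'I_N.  A basis element
   v_{s_1} /\ ... /\ v_{s_d} (s_1 < ... < s_d) of  /\^d k^{Md} is indexed by the
   d-element subset {s_1-1,...,s_d-1} of 'I_(M*d). *)
Notation wb M d := {S : {set 'I_(M * d)} | #|S| == d}.

(* basis of P_{d,n} = (/\^d k^{Md})^{(x) n}: n-tuples of wedge-basis indices *)
Notation idx M d n := {ffun 'I_n -> wb M d}.

Notation P k M d n := {ffun idx M d n -> k%type}.

Section Defs.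
Variable k : fieldType.
Variable M : nat.

Definition basisT d n (t : idx M d n) : P k M d n := [ffun u => (u == t)%:R].

Definition sym_inv d n (f : P k M d n) : Prop :=
  forall (s : 'S_n) (t : idx M d n), f [ffun i => t (s i)] = f t.

Definition incr n N (a : {ffun 'I_n -> 'I_N}) : bool :=
  [forall i : 'I_n, forall j : 'I_n, (i < j)%N ==> (a i < a j)%N].

(* a split (A,B) of [n+m], |A| = n, |B| = m, is encoded by the increasing
   enumerations a of A and b of B (disjoint images, hence complementary) *)
Definition split_ok n m (a : {ffun 'I_n -> 'I_(n + m)}) (b : {ffun 'I_m -> 'I_(n + m)}) : bool :=
  [&& incr a, incr b & [forall i, forall j, a i != b j]].

Definition shuffle d n m (f : P k M d n) (h : P k M d m) : P k M d (n + m) :=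
  [ffun z : idx M d (n + m) =>
     \sum_(a : {ffun 'I_n -> 'I_(n + m)})
       \sum_(b : {ffun 'I_m -> 'I_(n + m)} | split_ok a b)
          f [ffun i => z (a i)] * h [ffun j => z (b j)]].

(* g^c : [Me] -> [M(d+e)], the increasing bijection onto the complement of
   g([Md]) (1-based) *)
Definition gc (g : nat -> nat) (d e j : nat) : nat :=
  nth 0%N [seq i <- iota 1 (M * (d + e)) | i \notin [seq g l | l <- iota 1 (M * d)]] j.-1.

Definition g_ok (g : nat -> nat) (d e : nat) : bool :=
  [forall i : 'I_(M * d), (g i.+1 <= M * (d + e))%N].

Definition wmatch (g : nat -> nat) d e (S : wb M d) (T : wb M e) (z : wb M (d + e)) : bool :=
  [forall t : 'I_(M * (d + e)),
     (t \in val z) ==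
     ([exists s in val S, g s.+1 == t.+1] || [exists u in val T, gc g d e u.+1 == t.+1])].

(* sign with  g(v_S) /\ g^c(v_T) = wsign * v_{g(S) \cup g^c(T)} *)
Definition wsign (g : nat -> nat) d e (S : wb M d) (T : wb M e) : k :=
  (-1) ^+ #|[set p : 'I_(M * d) * 'I_(M * e) |
              [&& p.1 \in val S, p.2 \in val T & (gc g d e p.2.+1 < g p.1.+1)%N]]|.

Definition gstar (g : nat -> nat) d e n (f : P k M d n) (h : P k M e n) : P k M (d + e) n :=
  if g_ok g d e then
    [ffun z : idx M (d + e) n =>
       \sum_(x : idx M d n) \sum_(y : idx M e n)
         (if [forall i, wmatch g (x i) (y i) (z i)]
          then f x * h y * \prod_(i < n) wsign g (x i) (y i) else 0)]
  else 0.

(* P_{e,n} (x)_k P_{e,m}, in the tensor basis *)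
Local Notation T2 e n m := {ffun (idx M e n * idx M e m)%type -> k}.

Definition tens e n m (a1 : P k M e n) (a2 : P k M e m) : T2 e n m :=
  [ffun p => a1 p.1 * a2 p.2].

(* (f (x) b) *_g X, the linear extension of (f(x)b) *_g (a1(x)a2) := (f *_g a1).(b *_g a2) *)
Definition star2 (g : nat -> nat) d e n m (f : P k M d n) (b : P k M d m) (X : T2 e n m)
  : P k M (d + e) (n + m) :=
  [ffun z => \sum_(p : idx M e n * idx M e m)
     X p * shuffle (gstar g f (basisT p.1)) (gstar g b (basisT p.2)) z].

Definition symt e j (u : idx M e j) : P k M e j :=
  \sum_(tau : 'S_j) basisT [ffun i => u (tau i)].

(* Delta(s(e_t)) component in P_{e,n} (x) P_{e,m} *)
Definition Delta_s e n m (t : idx M e (n + m)) : T2 e n m :=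
  \sum_(a : {ffun 'I_n -> 'I_(n + m)})
    \sum_(b : {ffun 'I_m -> 'I_(n + m)} | split_ok a b)
      tens (symt [ffun i => t (a i)]) (symt [ffun j => t (b j)]).

(* component of Delta(a) in P^Sigma_{e,n} (x) P^Sigma_{e,m}, for symmetric a,
   using a = (1/(n+m)!) \sum_t a(t) s(e_t) and linearity of Delta *)
Definition Delta_nm e n m (a : P k M e (n + m)) : T2 e n m :=
  [ffun p => \sum_(t : idx M e (n + m)) (a t / ((n + m)`!)%:R) * @Delta_s e n m t p].

End Defs.

From HB Require Import structures.
From mathcomp Require Import all_boot all_order all_fingroup all_algebra.
Set Implicit Arguments. Unset Strict Implicit. Unset Printing Implicit Defensive.
Import Order.TTheory GRing.Theory.
Local Open Scope ring_scope.

(* Writing the shuffle on the left as a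
   sum over splits (A, B) of [n+m], the contribution of each split factorises:
   the matching condition and the sign of *_g are computed tensor factor by
   tensor factor, so they split into an A-part and a B-part, and the sum over
   the basis tensors y of P_{e,n+m} becomes a sum over the pairs (y|_A, y|_B).
   It remains to see that Delta(a) has coefficient a(y) at e_{y|_A} (x) e_{y|_B}
   when a is symmetric: each of the C(n+m,n) n! m! = (n+m)! triples
   (split, tau, sigma) contributes a(y)/(n+m)!, and characteristic 0 makes this
   division meaningful. *)

Section Increasing.
Variables p q : nat.
Implicit Types c : {ffun 'I_p -> 'I_q}.

Lemma incrP c : incr c -> forall i j : 'I_p, (i < j)%N -> (c i < c j)%N.
Proof. by move=> /forallP cI i j; move/forallP/(_ j)/implyP: (cI i). Qed.

Lemma incr_inj c : incr c -> injective c.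
Proof.
move=> cI i j cij; apply/val_inj/eqP; rewrite eqn_leq.
by apply/andP; split; rewrite leqNgt; apply/negP => /(incrP cI); rewrite cij ltnn.
Qed.

Lemma incr_sorted c : incr c -> sorted (relpre val ltn) (codom c).
Proof.
move=> cI; rewrite codomE (homo_sorted (incrP cI)) //.
by have := iota_ltn_sorted 0 p; rewrite -val_enum_ord sorted_map.
Qed.

Lemma incr_uniq c c' :
  incr c -> incr c' -> [set c i | i : 'I_p] = [set c' i | i : 'I_p] -> c = c'.
Proof.
move=> cI c'I cc'.
have ecodom : codom c = codom c'.
  apply: (irr_sorted_eq _ _ (incr_sorted cI) (incr_sorted c'I)).
  - by move=> x y z /=; apply: ltn_trans.
  - by move=> x /=; rewrite ltnn.
  have mem_codom d x : (x \in codom d) = (x \in [set d i | i : 'I_p]).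
    by apply/codomP/imsetP => -[i]; [exists i | move=> _; exists i].
  by move=> x; rewrite !mem_codom cc'.
apply/ffunP => i; have := congr1 (nth (c i) ^~ (enum_rank i)) ecodom.
by rewrite !nth_codom enum_rankK.
Qed.

Lemma incr_exists (A : {set 'I_q}) :
  #|A| = p -> exists2 c, incr c & [set c i | i : 'I_p] = A.
Proof.
move=> cardA.
pose r i := cast_ord (esym cardA) i.
pose c : {ffun 'I_p -> 'I_q} := [ffun i => Order.enum_val (A := A) (r i)].
have cI : incr c.
  apply/forallP => i; apply/forallP => j; apply/implyP => lt_ij; rewrite !ffunE.
  have lt_enum := leW_mono (Order.EnumVal.le_enum_val (A := A) le_total).
  by move: (lt_enum (r i) (r j)); rewrite !ltEord /= => ->.
exists c => //; apply/eqP; rewrite eqEcard card_imset; last exact: incr_inj.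
rewrite card_ord cardA leqnn andbT.
by apply/subsetP => x /imsetP [i _ ->]; rewrite ffunE Order.EnumVal.enum_valP.
Qed.

End Increasing.

Definition restr (V : Type) p q (c : {ffun 'I_p -> 'I_q}) (x : {ffun 'I_q -> V}) :
  {ffun 'I_p -> V} := [ffun i => x (c i)].

Section Splits.
Variables n m : nat.
Local Notation N := (n + m)%N.

Definition split_index (a : 'I_n -> 'I_N) (b : 'I_m -> 'I_N) (u : 'I_n + 'I_m) : 'I_N :=
  match u with inl i => a i | inr j => b j end.

Lemma split_index_bij (a : 'I_n -> 'I_N) (b : 'I_m -> 'I_N) :
  injective a -> injective b -> (forall i j, a i != b j) -> bijective (split_index a b).
Proof.
move=> aI bI ab; apply: inj_card_bij; last by rewrite card_sum !card_ord.
case=> [i|j] [i'|j'] //= eq_ab.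
- by rewrite (aI _ _ eq_ab).
- by move: (ab i j'); rewrite eq_ab eqxx.
- by move: (ab i' j); rewrite eq_ab eqxx.
- by rewrite (bI _ _ eq_ab).
Qed.

Variables (a : {ffun 'I_n -> 'I_N}) (b : {ffun 'I_m -> 'I_N}).
Hypothesis ab : split_ok a b.

Lemma split_ok_bij : bijective (split_index a b).
Proof.
case/and3P: ab => aI bI /forallP ab'; apply: split_index_bij; try exact: incr_inj.
by move=> i j; move/forallP: (ab' i); apply.
Qed.

Lemma sum_restr_split (R : nmodType) (V : finType)
    (F : {ffun 'I_n -> V} -> {ffun 'I_m -> V} -> R) :
  \sum_(x : {ffun 'I_N -> V}) F (restr a x) (restr b x) = \sum_x1 \sum_x2 F x1 x2.
Proof.
have [h_inv hK Kh] := split_ok_bij.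
pose join (x : {ffun 'I_n -> V} * {ffun 'I_m -> V}) : {ffun 'I_N -> V} :=
  [ffun i => match h_inv i with inl j => x.1 j | inr j => x.2 j end].
have restr_bij : bijective (fun x : {ffun 'I_N -> V} => (restr a x, restr b x)).
  exists join.
    move=> x; apply/ffunP => i; rewrite ffunE.
    by have := Kh i; case: (h_inv i) => [j|j] /= <-; rewrite ffunE.
  case=> x1 x2; congr pair; apply/ffunP => i; rewrite !ffunE.
    by rewrite (hK (inl i)).
  by rewrite (hK (inr i)).
by rewrite pair_bigA (reindex _ (onW_bij _ restr_bij)).
Qed.

Lemma prod_split (R : comNzRingType) (F : 'I_N -> R) :
  \prod_i F i = (\prod_i F (a i)) * \prod_j F (b j).
Proof.
have [h_inv hK Kh] := split_ok_bij.
have h_bij : bijective (split_index a b) by exists h_inv.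
by rewrite (reindex _ (onW_bij _ h_bij)) big_sumType.
Qed.

Lemma forall_split (F : 'I_N -> bool) :
  [forall i, F i] = [forall i, F (a i)] && [forall j, F (b j)].
Proof.
have [h_inv _ Kh] := split_ok_bij.
apply/forallP/andP => [Fall | [/forallP Fa /forallP Fb] i].
  by split; apply/forallP => i.
by rewrite -(Kh i); case: (h_inv i).
Qed.

Lemma split_compl : [set b j | j : 'I_m] = ~: [set a i | i : 'I_n].
Proof.
have [h_inv _ Kh] := split_ok_bij.
case/and3P: ab => _ _ /forallP ab'.
have a_neq_b i j : a i != b j by move/forallP: (ab' i); apply.
apply/setP => y; rewrite in_setC -(Kh y); case: (h_inv y) => [i|j] /=.
  rewrite imset_f //; apply/negbTE/imsetP => -[j _ eq_ab].
  by move: (a_neq_b i j); rewrite eq_ab eqxx.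
rewrite imset_f //; apply/esym/negP => /imsetP [i _ eq_ab].
by move: (a_neq_b i j); rewrite eq_ab eqxx.
Qed.

End Splits.

Lemma card_splits n m :
  #|[pred ab : {ffun 'I_n -> 'I_(n + m)} * {ffun 'I_m -> 'I_(n + m)} | split_ok ab.1 ab.2]|
  = 'C(n + m, n).
Proof.
set D := [pred ab : _ * _ | split_ok ab.1 ab.2].
pose img (ab : {ffun 'I_n -> 'I_(n + m)} * {ffun 'I_m -> 'I_(n + m)}) := [set ab.1 i | i : 'I_n].
have img_inj : {in D &, injective img}.
  case=> [a b] [a' b']; rewrite !inE /= => ab a'b' eq_img.
  have := ab; have := a'b'; case/and3P=> a'I b'I _; case/and3P=> aI bI _.
  have eq_a : a = a' by apply: incr_uniq.
  have eq_b : b = b'.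
    by apply: incr_uniq; rewrite // (split_compl ab) (split_compl a'b') [_ a @: _]eq_img.
  by rewrite eq_a eq_b.
rewrite -(card_in_imset img_inj); have := card_draws 'I_(n + m) n; rewrite card_ord => <-.
congr #|pred_of_set _|; apply/setP => A; rewrite inE; apply/imsetP/eqP => [[ab]|cardA].
  rewrite inE => /and3P[aI _ _] ->.
  by rewrite card_imset ?card_ord //; apply: incr_inj.
have cardAC : #|~: A| = m.
  by apply/eqP; rewrite -(eqn_add2l n) -{1}cardA cardsC card_ord.
have [a aI img_a] := incr_exists cardA.
have [b bI img_b] := incr_exists cardAC.
exists (a, b); last by rewrite /img img_a.
rewrite inE /= /split_ok aI bI /=.
apply/forallP => i; apply/forallP => j; apply/negP => /eqP eq_ab.
have : b j \in ~: A by rewrite -img_b imset_f.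
by rewrite inE -eq_ab -img_a imset_f.
Qed.

Lemma sum_splits_perms_const (R : nmodType) n m (x : R) :
  \sum_(a : {ffun 'I_n -> 'I_(n + m)}) \sum_(b : {ffun 'I_m -> 'I_(n + m)} | split_ok a b)
    \sum_(tau : 'S_n) \sum_(sigma : 'S_m) x = x *+ (n + m)`!.
Proof.
rewrite pair_big_dep /= sumr_const card_splits.
under eq_bigr do rewrite sumr_const card_Sn.
rewrite sumr_const card_Sn -!mulrnA; congr (_ *+ _).
by rewrite -(bin_fact (leq_addr m n)) addKn mulnA [RHS]mulnC [(m`! * _)%N]mulnC.
Qed.

Lemma restr_pair_perm (V : eqType) n m
    (a a' : 'I_n -> 'I_(n + m)) (b b' : 'I_m -> 'I_(n + m)) :
    bijective (split_index a b) -> bijective (split_index a' b') ->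
  exists pi : 'S_(n + m), forall y t : {ffun 'I_(n + m) -> V},
    ([ffun i => y (a i)] == [ffun i => t (a' i)]) && ([ffun j => y (b j)] == [ffun j => t (b' j)])
    = (t == [ffun i => y (pi i)]).
Proof.
move=> [h_inv hK Kh] [h_inv' hK' Kh'].
have pi_inj : injective (fun i => split_index a b (h_inv' i)).
  by move=> i j /(can_inj hK) /(can_inj Kh').
exists (perm pi_inj) => y t; apply/andP/eqP => [[/eqP/ffunP eq_a /eqP/ffunP eq_b] | ->].
  apply/ffunP => i; rewrite ffunE permE -{1}(Kh' i).
  by case: (h_inv' i) => [i1|j1] /=; [move: (eq_a i1) | move: (eq_b j1)]; rewrite !ffunE => ->.
by split; apply/eqP/ffunP => i; rewrite !ffunE permE;
  [rewrite (hK' (inl i)) | rewrite (hK' (inr i))].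
Qed.

Section Coproduct.
Variables (k : fieldType) (M e : nat).

Lemma symtE j (u : idx M e j) (q : idx M e j) :
  symt k u q = \sum_(tau : 'S_j) (q == [ffun i => u (tau i)])%:R :> k.
Proof. by rewrite /symt sum_ffunE; apply: eq_bigr => tau _; rewrite ffunE. Qed.

Variables n m : nat.
Local Notation N := (n + m)%N.

Lemma Delta_sE (t : idx M e N) (p : idx M e n * idx M e m) :
  Delta_s k t p =
  \sum_(a : {ffun 'I_n -> 'I_N}) \sum_(b : {ffun 'I_m -> 'I_N} | split_ok a b)
    \sum_(tau : 'S_n) \sum_(sigma : 'S_m)
      ((p.1 == [ffun i => t (a (tau i))]) && (p.2 == [ffun j => t (b (sigma j))]))%:R.
Proof.
have restr_perm j (c : {ffun 'I_j -> 'I_N}) (s : 'S_j) :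
  [ffun i => [ffun i' => t (c i')] (s i)] = [ffun i => t (c (s i))].
  by apply/ffunP => i; rewrite !ffunE.
rewrite /Delta_s sum_ffunE; apply: eq_bigr => a _; rewrite sum_ffunE; apply: eq_bigr => b _.
rewrite ffunE !symtE big_distrl; apply: eq_bigr => tau _; rewrite big_distrr.
by apply: eq_bigr => sigma _; rewrite /= !restr_perm -natrM mulnb.
Qed.

Lemma sum_sym_match (x : P k M e N) (x_sym : sym_inv x)
    (a : {ffun 'I_n -> 'I_N}) (b : {ffun 'I_m -> 'I_N}) (ab : split_ok a b)
    (a' : {ffun 'I_n -> 'I_N}) (b' : {ffun 'I_m -> 'I_N}) (a'b' : split_ok a' b')
    (tau : 'S_n) (sigma : 'S_m) (y : idx M e N) :
  \sum_(t : idx M e N) x t *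
    ((restr a y == [ffun i => t (a' (tau i))]) && (restr b y == [ffun j => t (b' (sigma j))]))%:R
  = x y.
Proof.
have a'b'_bij : bijective (split_index (fun i => a' (tau i)) (fun j => b' (sigma j))).
  case/and3P: a'b' => a'I b'I /forallP a'b'_neq; apply: split_index_bij.
  - by move=> i i' /(incr_inj a'I) /perm_inj.
  - by move=> j j' /(incr_inj b'I) /perm_inj.
  by move=> i j; move/forallP: (a'b'_neq (tau i)); apply.
have [pi match_pi] := restr_pair_perm (wb M e) (split_ok_bij ab) a'b'_bij.
rewrite (eq_bigr (fun t => if t == [ffun i => y (pi i)] then x t else 0)) => [|t _].
  by rewrite -big_mkcond big_pred1_eq x_sym.
by rewrite [_ && _]match_pi; case: (_ == _); rewrite ?mulr1 ?mulr0.
Qed.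

Lemma Delta_nm_restr (chark : [pchar k] =i pred0) (x : P k M e N) (x_sym : sym_inv x)
    (a : {ffun 'I_n -> 'I_N}) (b : {ffun 'I_m -> 'I_N}) (ab : split_ok a b) (y : idx M e N) :
  Delta_nm x (restr a y, restr b y) = x y.
Proof.
have N_unit : (N`!%:R : k) != 0 by rewrite ((pcharf0P k).1 chark) -lt0n fact_gt0.
rewrite ffunE; under eq_bigr do rewrite Delta_sE big_distrr.
rewrite exchange_big (eq_bigr (fun a' : {ffun 'I_n -> 'I_N} =>
  \sum_(b' : {ffun 'I_m -> 'I_N} | split_ok a' b') \sum_(tau : 'S_n) \sum_(sigma : 'S_m)
    x y / N`!%:R)).
  by rewrite sum_splits_perms_const -[_ *+ N`!]mulr_natr divfK.
move=> a' _; under eq_bigr do rewrite big_distrr.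
rewrite exchange_big; apply: eq_bigr => b' a'b'; under eq_bigr do rewrite big_distrr.
rewrite exchange_big; apply: eq_bigr => tau _; under eq_bigr do rewrite big_distrr.
rewrite exchange_big; apply: eq_bigr => sigma _.
rewrite -(sum_sym_match x_sym ab a'b' tau sigma y) mulr_suml.
by apply: eq_bigr => t _; rewrite /= mulrAC.
Qed.

Lemma sum_Delta_nm_split (chark : [pchar k] =i pred0) (x : P k M e N) (x_sym : sym_inv x)
    (a : {ffun 'I_n -> 'I_N}) (b : {ffun 'I_m -> 'I_N}) (ab : split_ok a b)
    (G1 : idx M e n -> k) (G2 : idx M e m -> k) :
  \sum_(y : idx M e N) x y * (G1 (restr a y) * G2 (restr b y)) =
  \sum_(p : idx M e n * idx M e m) Delta_nm x p * (G1 p.1 * G2 p.2).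
Proof.
under eq_bigr do rewrite -(Delta_nm_restr chark x_sym ab).
rewrite (sum_restr_split ab (fun y1 y2 => Delta_nm x (y1, y2) * (G1 y1 * G2 y2))) pair_bigA.
by apply: eq_bigr => -[].
Qed.

End Coproduct.

Section Gstar.
Variables (k : fieldType) (M : nat) (g : nat -> nat) (d e : nat).
Hypothesis g_okde : g_ok M g d e.

Lemma gstar_basisE p (F : P k M d p) (q : idx M e p) (w : idx M (d + e) p) :
  gstar g F (basisT k q) w =
  \sum_(x : idx M d p) (if [forall i, wmatch g (x i) (q i) (w i)]
                        then F x * \prod_(i < p) wsign k g (x i) (q i) else 0).
Proof.
rewrite /gstar g_okde ffunE; apply: eq_bigr => x _.
rewrite (bigD1 q) //= [X in _ + X = _]big1 => [|y neq_yq]; first by rewrite ffunE eqxx mulr1 addr0.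
by rewrite ffunE (negbTE neq_yq) mulr0 mul0r; case: ifP.
Qed.

Variables n m : nat.
Local Notation N := (n + m)%N.

Lemma gstar_basis_split (a : {ffun 'I_n -> 'I_N}) (b : {ffun 'I_m -> 'I_N}) (ab : split_ok a b)
    (F1 : P k M d n) (F2 : P k M d m) (y : idx M e N) (z : idx M (d + e) N) :
  \sum_(x : idx M d N) (if [forall i, wmatch g (x i) (y i) (z i)]
     then F1 (restr a x) * F2 (restr b x) * \prod_(i < N) wsign k g (x i) (y i) else 0) =
  gstar g F1 (basisT k (restr a y)) (restr a z) * gstar g F2 (basisT k (restr b y)) (restr b z).
Proof.
rewrite !gstar_basisE big_distrl; under eq_bigr do rewrite big_distrr.
rewrite -(sum_restr_split ab (fun x1 x2 => _ * _)); apply: eq_bigr => x _ /=.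
have match_restr p (c : {ffun 'I_p -> 'I_N}) :
    [forall i, wmatch g (restr c x i) (restr c y i) (restr c z i)] =
    [forall i, wmatch g (x (c i)) (y (c i)) (z (c i))].
  by apply: eq_forallb => i; rewrite !ffunE.
have sign_restr p (c : {ffun 'I_p -> 'I_N}) :
    \prod_i wsign k g (restr c x i) (restr c y i) = \prod_i wsign k g (x (c i)) (y (c i)).
  by apply: eq_bigr => i _; rewrite !ffunE.
rewrite (forall_split ab) (prod_split ab (fun i => wsign k g (x i) (y i))).
rewrite (match_restr _ a) (match_restr _ b) (sign_restr _ a) (sign_restr _ b).
case: [forall i, _]; case: [forall i, _]; rewrite /= ?mulr0 ?mul0r //.
by rewrite mulrACA.
Qed.

End Gstar.

Section Expansion.
Variables (k : fieldType) (M : nat) (g : nat -> nat) (d e n m : nat).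
Local Notation N := (n + m)%N.

Lemma gstar_shuffleE (F1 : P k M d n) (F2 : P k M d m) (h : P k M e N) (z : idx M (d + e) N) :
    g_ok M g d e ->
  gstar g (shuffle F1 F2) h z =
  \sum_(ab : {ffun 'I_n -> 'I_N} * {ffun 'I_m -> 'I_N} | split_ok ab.1 ab.2)
    \sum_(y : idx M e N) h y *
      \sum_(x : idx M d N) (if [forall i, wmatch g (x i) (y i) (z i)]
        then F1 (restr ab.1 x) * F2 (restr ab.2 x) * \prod_(i < N) wsign k g (x i) (y i) else 0).
Proof.
move=> g_okde; rewrite /gstar g_okde ffunE exchange_big [RHS]exchange_big /=.
apply: eq_bigr => y _; under [RHS]eq_bigr do rewrite big_distrr.
rewrite [RHS]exchange_big /=; apply: eq_bigr => x _.
rewrite ffunE pair_big_dep /=.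
case: ifP => _; last by rewrite big1 // => ab _; rewrite mulr0.
by rewrite !mulr_suml; apply: eq_bigr => ab _; rewrite mulrAC mulrC !mulrA.
Qed.

Lemma star2E (F1 : P k M d n) (F2 : P k M d m) (X : {ffun (idx M e n * idx M e m) -> k})
    (z : idx M (d + e) N) :
  star2 g F1 F2 X z =
  \sum_(ab : {ffun 'I_n -> 'I_N} * {ffun 'I_m -> 'I_N} | split_ok ab.1 ab.2)
    \sum_(p : idx M e n * idx M e m) X p *
      (gstar g F1 (basisT k p.1) (restr ab.1 z) * gstar g F2 (basisT k p.2) (restr ab.2 z)).
Proof.
rewrite ffunE exchange_big; apply: eq_bigr => p _.
by rewrite ffunE pair_big_dep big_distrr.
Qed.

End Expansion.

Lemma gstar_not_ok (k : fieldType) (M : nat) (g : nat -> nat) (d e n : nat)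
    (F : P k M d n) (h : P k M e n) :
  ~~ g_ok M g d e -> gstar g F h = 0.
Proof. by rewrite /gstar => /negbTE ->. Qed.

Lemma shuffle0l (k : fieldType) (M d n m : nat) (h : P k M d m) :
  shuffle (0 : P k M d n) h = 0.
Proof.
apply/ffunP => z; rewrite !ffunE big1 // => a _.
by rewrite big1 // => b _; rewrite ffunE mul0r.
Qed.

Theorem mainTheorem15 (k : fieldType) (chark : [pchar k] =i pred0) (M d e n m : nat)
  (f : P k M d n) (b : P k M d m) (a : P k M e (n + m)) (g : nat -> nat)
  (g_inc : forall i j : nat, (i < j)%N -> (g i < g j)%N)
  (f_sym : sym_inv f) (b_sym : sym_inv b) (a_sym : sym_inv a) :
  gstar g (shuffle f b) a = star2 g f b (@Delta_nm k M e n m a).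
Proof.
have [g_okde | g_not_ok] := boolP (g_ok M g d e); last first.
  apply/ffunP => z; rewrite gstar_not_ok // !ffunE big1 // => p _.
  by rewrite gstar_not_ok // shuffle0l ffunE [X in _ * X]ffunE mulr0.
apply/ffunP => z; rewrite gstar_shuffleE // star2E; apply: eq_bigr => -[al be] /= ab.
under eq_bigr do rewrite gstar_basis_split //.
exact: (sum_Delta_nm_split chark a_sym ab (fun q => gstar g f (basisT k q) (restr al z))
                                       (fun q => gstar g b (basisT k q) (restr be z))).
Qed.
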